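(* Let $X \subseteq 2^\omega$ be nice. Then for every Borel function $x \mapsto f^x$ from $2^\omega$ to $\omega^\omega$ there exists a strictly increasing sequence $\{n_k : k \in \omega\}$ of natural numbers such that for every $x \in X$ there are infinitely many $k$ with $f^x(n_k) < n_{k+1}$.
   Context: A set $X \subseteq 2^\omega$ is nice if for every Borel function $x \mapsto f^x$ from $2^\omega$ to $\omega^\omega$ there exists $g \in \omega^\omega$ such that for every $x \in X$ there are infinitely many $n$ with $f^x(n) = g(n)$. *)

From HB Require Import structures.
From mathcomp Require Import all_boot all_order all_algebra.
From mathcomp Require Import all_classical all_reals all_analysis.
Set Implicit Arguments. Unset Strict Implicit. Unset Printing Implicit Defensive.
Local Open Scope classical_set_scope.

(* Cantor space 2^omega is the library's [cantor_space]
   (= prod_topology (fun _ : nat => bool)).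
   Baire space omega^omega: product of countably many discrete copies of nat. *)
Definition baire_space : topologicalType := prod_topology (fun _ : nat => nat).

Definition borel_set {T : topologicalType} (A : set T) : Prop := <<s open >> A.

Definition borel_fun {S T : topologicalType} (f : S -> T) : Prop :=
  forall B : set T, borel_set B -> borel_set (f @^-1` B).

Definition infinitely_many (P : nat -> Prop) : Prop :=
  forall N : nat, exists n, (N <= n)%N /\ P n.

Definition nice (X : set cantor_space) : Prop :=
  forall f : cantor_space -> baire_space, borel_fun f ->
    exists g : nat -> nat,
      forall x, X x -> infinitely_many (fun n => f x n = g n).

From HB Require Import structures.
From mathcomp Require Import all_boot all_order all_algebra.
From mathcomp Require Import all_classical all_reals all_analysis.
Local Open Scope classical_set_scope.

(* Write b p n := n + 1 + max_{i <= n} p i, which exceeds n and every p i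
   with i <= n.  The map p |-> b p o b p is continuous on Baire space, so
   niceness of X gives g with b (f x) (b (f x) m) = g m for infinitely many m,
   for each x in X.  Let n_0 = 0 and n_{k+1} = b g n_k, and pick such an m
   with n_k <= m < n_{k+1}.  Either b (f x) m < n_{k+1}, whence
   f x n_k < n_{k+1}; or n_{k+1} <= b (f x) m, whence
   f x n_{k+1} < b (f x) n_{k+1} <= g m < n_{k+2}. *)

Definition prefix_bound (p : nat -> nat) (n : nat) : nat :=
  n.+1 + \max_(i < n.+1) p i.

Section PrefixBound.
Variable p : nat -> nat.

Lemma ltn_prefix_bound_id n : n < prefix_bound p n.
Proof. by rewrite /prefix_bound ltn_addr. Qed.

Lemma ltn_prefix_bound {i n} : i <= n -> p i < prefix_bound p n.
Proof.
move=> le_in; rewrite /prefix_bound addSn ltnS (leq_trans _ (leq_addl _ _)) //.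
exact: (@leq_bigmax _ (fun j : 'I_n.+1 => p j) (Ordinal (le_in : i < n.+1))).
Qed.

Lemma leq_prefix_bound {m n} : m <= n -> prefix_bound p m <= prefix_bound p n.
Proof.
move=> le_mn; rewrite /prefix_bound leq_add ?ltnS //.
apply/bigmax_leqP => i _.
exact: (@leq_bigmax _ (fun j : 'I_n.+1 => p j) (widen_ord (le_mn : m.+1 <= n.+1) i)).
Qed.

Lemma eq_prefix_bound q n :
  (forall i, i <= n -> q i = p i) -> prefix_bound q n = prefix_bound p n.
Proof.
by move=> eq_qp; rewrite /prefix_bound; congr (_ + _); apply: eq_bigr => i _;
  apply: eq_qp; rewrite -ltnS.
Qed.

End PrefixBound.

Lemma bracket_increasing {s : nat -> nat} {N m} :
  (forall k, s k < s k.+1) -> s N <= m ->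
  exists2 k, N <= k & s k <= m < s k.+1.
Proof.
move=> lt_s le_sNm.
have le_ks k : k <= s k by elim: k => // k IHk; apply: leq_ltn_trans (lt_s k).
have exP : exists k, s k <= m by exists N.
have ubP k : s k <= m -> k <= m by exact: leq_trans (le_ks k).
case: (ex_maxnP exP ubP) => k le_skm max_k; exists k; first exact: max_k.
by rewrite le_skm ltnNge; apply/negP => /max_k; rewrite ltnn.
Qed.

Section DoubleBound.
Variables (p g s : nat -> nat).
Hypothesis lt_s : forall k, s k < s k.+1.
Hypothesis g_lt_s : forall {k i}, i <= s k -> g i < s k.+1.

Lemma double_bound_hit {k m} :
  prefix_bound p (prefix_bound p m) = g m -> s k <= m < s k.+1 ->
  p (s k) < s k.+1 \/ p (s k.+1) < s k.+2.
Proof.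
move=> hit /andP[le_skm lt_msk].
have [lt_bm | le_bm] := ltnP (prefix_bound p m) (s k.+1).
  left; apply: ltn_trans _ lt_bm; apply: leq_trans _ (leq_prefix_bound p le_skm).
  exact: ltn_prefix_bound.
right; apply: ltn_trans _ (g_lt_s (ltnW lt_msk)); rewrite -hit.
apply: leq_trans _ (leq_prefix_bound p le_bm); exact: ltn_prefix_bound.
Qed.

Lemma infinitely_many_bound_hits :
  infinitely_many (fun m => prefix_bound p (prefix_bound p m) = g m) ->
  infinitely_many (fun k => p (s k) < s k.+1).
Proof.
move=> hits N; have [m [le_sNm hit]] := hits (s N).
have [k le_Nk bracket_m] := bracket_increasing lt_s le_sNm.
have [hit_k | hit_k1] := double_bound_hit hit bracket_m.
- by exists k.
- by exists k.+1; rewrite ltnW.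
Qed.

End DoubleBound.

Lemma near_prefix (phi : baire_space) K :
  \forall psi \near phi, forall i, i <= K -> psi i = phi i.
Proof.
have near_coord i : \forall psi \near phi, psi i = phi i.
  exact: (@proj_continuous nat (fun _ => nat) i phi) (discrete_set1 (phi i)).
elim: K => [|K IHK].
  by apply: filterS (near_coord 0) => psi eq0 i; rewrite leqn0 => /eqP ->.
apply: filterS (filterI IHK (near_coord K.+1)) => psi [eqK eqK1] i.
by rewrite leq_eqVlt => /predU1P[-> //|]; rewrite ltnS; apply: eqK.
Qed.

Lemma finitely_determined_continuous (F : baire_space -> baire_space) :
  (forall phi t, exists K, forall psi : baire_space,
     (forall i, i <= K -> psi i = phi i) -> F psi t = F phi t) ->
  continuous F.
Proof.
move=> detF phi; apply/pointwise_cvgP => t; apply/discrete_cvg.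
have [K eqF] := detF phi t.
exact: filterS (near_prefix phi K).
Qed.

Lemma continuous_borel_fun (S T : topologicalType) (F : S -> T) :
  continuous F -> borel_fun F.
Proof.
move=> cF B; apply: (smallest_sub (X := [set B | <<s open >> (F @^-1` B)])).
- split=> [|A|A] /=.
  + by rewrite preimage_set0; exact: sigma_algebra0.
  + by rewrite setTD -preimage_setC -setTD; exact: sigma_algebraCD.
  + by rewrite preimage_bigcup; exact: sigma_algebra_bigcup.
- by move=> A oA; apply: sub_sigma_algebra; exact: open_comp.
Qed.

Definition double_bound (phi : baire_space) : baire_space :=
  fun n => prefix_bound phi (prefix_bound phi n).

Lemma double_bound_continuous : continuous double_bound.
Proof.
apply: finitely_determined_continuous => phi t; exists (prefix_bound phi t).
move=> psi eq_psi; rewrite /double_bound (@eq_prefix_bound phi psi t).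
  by apply: eq_prefix_bound.
by move=> i le_it; apply/eq_psi/(leq_trans le_it)/ltnW/ltn_prefix_bound_id.
Qed.

Theorem lemma2p6 (X : set cantor_space) : nice X ->
  forall f : cantor_space -> baire_space, borel_fun f ->
    exists nk : nat -> nat,
      (forall k, (nk k < nk k.+1)%N) /\
      forall x, X x -> infinitely_many (fun k => (f x (nk k) < nk k.+1)%N).
Proof.
move=> niceX f borel_f.
have borel_df : borel_fun (double_bound \o f).
  move=> B borelB; rewrite comp_preimage; apply: borel_f.
  exact: continuous_borel_fun double_bound_continuous B borelB.
have [g hits] := niceX _ borel_df.
pose nk k := iter k (prefix_bound g) 0.
have lt_nk k : nk k < nk k.+1 by exact: ltn_prefix_bound_id.
exists nk; split=> // x Xx.
apply: (@infinitely_many_bound_hits (f x) g nk lt_nk _ (hits x Xx)) => k i.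
exact: ltn_prefix_bound.
Qed.
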